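(* Let $n\ge 2$, $\rho>0$, and let $F$ be a continuous distribution supported on the non-negative real numbers with a monotone decreasing density $f$ (and positive mean). Then the best-case zero-outage capacity $\overline{R^{0}}(\rho)=\log_2(1+\rho\,\phi(0))$ satisfies $\overline{R^{0}}(\rho)>0$.
   Context: Let $G=F^{-1}$ be the quantile function of $F$. For $a\in[0,1]$ define $H_a(x)=(n-1)G(a+(n-1)x)+G(1-x)$ and $c_n(a)=\min\{c\in[0,\tfrac{1-a}{n}]: \int_c^{(1-a)/n}H_a(t)\,dt\ge(\tfrac{1-a}{n}-c)H_a(c)\}$, and $\phi(a)=H_a(c_n(a))$ if $c_n(a)>0$, $\phi(a)=n\,\mathbb{E}[X\mid X>G(a)]$ with $X\sim F$ if $c_n(a)=0$. The quantity $\log_2(1+\rho\phi(\varepsilon))$ is the largest $\varepsilon$-outage capacity $\sup\{R\ge0:\Pr(\sum_{i=1}^n|h_i|^2<(2^R-1)/\rho)<\varepsilon\}$ over all joint distributions of $(|h_1|^2,\dots,|h_n|^2)$ with each $|h_i|^2\sim F$; the zero-outage case is $\varepsilon=0$. *)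

From HB Require Import structures.
From mathcomp Require Import all_boot all_order all_algebra.
From mathcomp Require Import all_classical all_reals all_analysis.
Set Implicit Arguments. Unset Strict Implicit. Unset Printing Implicit Defensive.
Import Order.TTheory GRing.Theory Num.Theory.
Import numFieldNormedType.Exports.
Local Open Scope classical_set_scope.
Local Open Scope ring_scope.

(* Quantile function G = F^{-1}: G p = inf {x >= 0 | p <= F x}, valued in \bar R
   (G 1 = +oo when the support is unbounded; G 0 = 0, the left end of the
   support [0,oo)). *)
Definition quantile (R : realType) (F : R -> R) (p : R) : \bar R :=
  ereal_inf [set x%:E | x in [set x : R | 0 <= x /\ p <= F x]].

Definition Hfun (R : realType) (F : R -> R) (n : nat) (a x : R) : \bar R :=
  ((n.-1)%:R%:E * quantile F (a + (n.-1)%:R * x) + quantile F (1 - x))%E.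

Definition cn_cond (R : realType) (F : R -> R) (n : nat) (a c : R) : Prop :=
  ((((1 - a) / n%:R - c)%R)%:E * Hfun F n a c <=
    \int[@lebesgue_measure R]_(t in `[c, ((1 - a) / n%:R)%R]) Hfun F n a t)%E.

(* c_n(a) = min { c in [0,(1-a)/n] | condition } (taken as the infimum) *)
Definition c_n (R : realType) (F : R -> R) (n : nat) (a : R) : R :=
  inf [set c : R | 0 <= c <= (1 - a) / n%:R /\ cn_cond F n a c].

Definition cond_mean (R : realType) (F f : R -> R) (t : R) : \bar R :=
  ((\int[@lebesgue_measure R]_(x in `]t, +oo[) (x * f x)%:E) *
     (((1 - F t)^-1)%R)%:E)%E.

Definition phi (R : realType) (F f : R -> R) (n : nat) (a : R) : \bar R :=
  if 0 < c_n F n a then Hfun F n a (c_n F n a)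
  else (n%:R%:E * cond_mean F f (fine (quantile F a)))%E.

Definition capacity (R : realType) (rho : R) (ph : \bar R) : \bar R :=
  match ph with
  | r%:E => ((ln (1 + rho * r) / ln 2)%R)%:E
  | +oo%E => +oo%E
  | -oo%E => -oo%E
  end.

From HB Require Import structures.
From mathcomp Require Import all_boot all_order all_algebra.
From mathcomp Require Import all_classical all_reals all_analysis.
Set Implicit Arguments. Unset Strict Implicit. Unset Printing Implicit Defensive.
Import Order.TTheory GRing.Theory Num.Theory.
Import numFieldNormedType.Exports.
Local Open Scope classical_set_scope.
Local Open Scope ring_scope.

(* If c_n(0) > 0, its defining set is nonempty (the infimum of the empty set
   is 0), so c_n(0) <= 1/n < 1 and phi(0) = H_0(c_n(0)) >= G(1 - c_n(0)) > 0:
   quantiles of positive levels are positive because F(d) = int_0^d f tends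
   to 0 as d -> 0+.  Otherwise phi(0) = n E[X | X > G(0)] = n E[X] > 0, since
   G(0) = 0 and F(0) = 0. *)

Section QuantileBounds.
Variables (R : realType) (F : R -> R).

Lemma quantile_ge0 p : (0 <= quantile F p)%E.
Proof. by apply/ereal_infP => _ [x [x0 _] <-]; rewrite lee_fin. Qed.

Lemma quantile0 : 0 <= F 0 -> quantile F 0 = 0%E.
Proof.
move=> F0; apply/le_anti; rewrite quantile_ge0 andbT.
by apply: ereal_inf_lbound; exists 0.
Qed.

Lemma le_quantile p d :
  {homo F : x y / x <= y} -> F d < p -> (d%:E <= quantile F p)%E.
Proof.
move=> F_homo Fd; apply/ereal_infP => _ [x [_ px] <-].
rewrite lee_fin leNgt; apply/negP => xd.
by have := le_lt_trans (le_trans px (F_homo _ _ (ltW xd))) Fd; rewrite ltxx.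
Qed.

Lemma Hfun_gt0 n a x : (0 < quantile F (1 - x))%E -> (0 < Hfun F n a x)%E.
Proof.
move=> G_gt0; apply: lte_paddl => //.
by rewrite mule_ge0 ?lee_fin ?ler0n ?quantile_ge0.
Qed.

Lemma c_n_le n a : 0 < c_n F n a -> c_n F n a <= (1 - a) / n%:R.
Proof.
rewrite /c_n; set S := [set c | _] => inf_gt0.
have [[s Ss]|S0] := pselect (exists s, S s); last first.
  have S_eq0 : S = set0 by apply/seteqP; split => // s Ss; apply: S0; exists s.
  by move: inf_gt0; rewrite S_eq0 inf0 ltxx.
have S_lb : has_lbound S by exists 0 => y [/andP[]].
by apply: le_trans (ge_inf S_lb Ss) _; case: Ss => /andP[].
Qed.

End QuantileBounds.

Lemma capacity_gt0 (R : realType) (rho : R) (ph : \bar R) :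
  0 < rho -> (0 < ph)%E -> (0 < capacity rho ph)%E.
Proof.
move=> rho_gt0; case: ph => [r| |] //=; rewrite lte_fin => r_gt0.
by apply: divr_gt0; apply: ln_gt0; rewrite ?ltr1n // ltrDl mulr_gt0.
Qed.

Section Density.
Variables (R : realType) (F f : R -> R).
Local Notation mu := (@lebesgue_measure R).
Hypothesis mf : measurable_fun setT f.
Hypothesis f_ge0 : forall x, 0 <= f x.
Hypothesis f_lt0 : forall x, x < 0 -> f x = 0.
Hypothesis F_def : forall x, ((F x)%:E = \int[mu]_(t in `]-oo, x]) (f t)%:E)%E.
Hypothesis f_total : (\int[mu]_(t in setT) (f t)%:E = 1)%E.

Lemma cdf_Icc x : ((F x)%:E = \int[mu]_(t in `[0%R, x]) (f t)%:E)%E.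
Proof.
rewrite F_def integral_mkcond [RHS]integral_mkcond.
apply: eq_integral => t _; rewrite !patchE.
have [t_lt0|t_ge0] := ltP t 0; first by rewrite f_lt0 //; do 2 case: ifP.
by rewrite !mem_setE !in_itv /= t_ge0.
Qed.

Lemma cdf_ge0 x : 0 <= F x.
Proof. by rewrite -lee_fin F_def integral_ge0 // => t _; rewrite lee_fin. Qed.

Lemma cdf0 : F 0 = 0.
Proof. by have := cdf_Icc 0; rewrite set_itv1 integral_set1 => -[]. Qed.

Lemma cdf_homo : {homo F : x y / x <= y}.
Proof.
move=> x y xy; rewrite -lee_fin !cdf_Icc ge0_subset_integral //.
- exact/measurable_realfun.measurable_EFinP/measurable_funTS.
- by move=> t _; rewrite lee_fin.
- by apply: subset_itvl; rewrite bnd_simp.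
Qed.

Lemma density_integrable : mu.-integrable setT (EFin \o f).
Proof.
apply/integrableP; split; first exact/measurable_realfun.measurable_EFinP.
under eq_integral do rewrite /= ger0_norm //.
by rewrite f_total ltry.
Qed.

Lemma cdf_small p : 0 < p -> exists2 d, 0 < d & F d < p.
Proof.
move=> p_gt0.
have [e [e_gt0 small]] := integral_normr_continuous density_integrable p_gt0.
have e2_gt0 : 0 < e / 2 by rewrite divr_gt0.
exists (e / 2) => //.
have : (mu `[0%R, (e / 2)%R] < e%:E)%E.
  rewrite lebesgue_measure_itv /= lte_fin e2_gt0 lte_fin subr0.
  by rewrite ltr_pdivrMr // ltr_pMr // ltr1n.
move=> /(small _ (measurable_itv _)); rewrite /Rintegral.
by under eq_integral do rewrite ger0_norm //; rewrite -cdf_Icc.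
Qed.

Lemma quantile_gt0 p : 0 < p -> (0 < quantile F p)%E.
Proof.
move=> /cdf_small[d d_gt0 Fd].
by apply: (lt_le_trans _ (le_quantile cdf_homo Fd)); rewrite lte_fin.
Qed.

Lemma cond_mean_quantile0 :
  cond_mean F f (fine (quantile F 0)) = (\int[mu]_(t in setT) (t * f t)%:E)%E.
Proof.
rewrite /cond_mean quantile0 ?cdf_ge0 //= cdf0 subr0 invr1 mule1.
rewrite integral_mkcond; apply: eq_integral => t _; rewrite patchE.
case: ifPn => // /negP; rewrite mem_setE in_itv /= andbT => /negP; rewrite -leNgt => t_le0.
have [t_lt0|t_ge0] := ltP t 0; first by rewrite f_lt0 ?mulr0.
by rewrite (@le_anti _ _ t 0) ?t_le0 ?t_ge0 ?mul0r.
Qed.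

End Density.

Theorem proposition1 (R : realType) (n : nat) (rho : R) (F f : R -> R) :
  (2 <= n)%N -> 0 < rho ->
  measurable_fun setT f ->
  (forall x, 0 <= f x) ->
  (forall x, x < 0 -> f x = 0) ->
  (forall x y, 0 < x -> x <= y -> f y <= f x) ->
  (forall x, ((F x)%:E = \int[@lebesgue_measure R]_(t in `]-oo, x]) (f t)%:E)%E) ->
  (\int[@lebesgue_measure R]_(t in setT) (f t)%:E = 1)%E ->
  (0 < \int[@lebesgue_measure R]_(t in setT) (t * f t)%:E)%E ->
  (0 < capacity rho (phi F f n 0))%E.
Proof.
move=> n_ge2 rho_gt0 mf f_ge0 f_lt0 _ F_def f_total mean_gt0.
have n_gt0 : (0 < n)%N by apply: leq_trans n_ge2.
apply: capacity_gt0 => //; rewrite /phi; case: ifPn => [c_gt0|_].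
- apply/Hfun_gt0/(quantile_gt0 mf f_ge0 f_lt0 F_def f_total).
  rewrite subr_gt0; apply: le_lt_trans (c_n_le c_gt0) _.
  by rewrite subr0 ltr_pdivrMr ?ltr0n // mul1r ltr1n.
- rewrite cond_mean_quantile0 //.
  by rewrite mule_gt0 // lte_fin ltr0n.
Qed.
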